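(* Let $m\ge n\ge1$ and let $G=(g_1,\dots,g_m):\mathbb{B}^n\to\mathbb{B}^m$ be a proper holomorphic map with $G(0)=0$. Define $H_G=\big(g_1,\dots,g_{m-1},\frac{P_m}{Q},\frac{P_{m+1}}{Q}\big)$ where $P_m=\frac12\sum_{i=1}^{m-1}g_i^2-g_m^2+g_m$, $P_{m+1}=\sqrt{-1}\big(\frac12\sum_{i=1}^{m-1}g_i^2+g_m^2-g_m\big)$, $Q=\sqrt2(1-g_m)$, and $W_G=\big(g_1,\dots,g_m,1-\sqrt{1-\sum_{j=1}^mg_j^2}\big)$ (branch with $\sqrt1=1$). Then for $\Phi\in\{H_G,W_G\}$ one has $1-\Phi\overline{\Phi}^t+\frac14|\Phi\Phi^t|^2=1-\sum_{i=1}^m|g_i|^2$ on $\mathbb{B}^n$, and both $H_G$ and $W_G$ are proper holomorphic maps from $\mathbb{B}^n$ to $D^{IV}_{m+1}$.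
   Context: $\mathbb{B}^n=\{z\in\mathbb{C}^n:|z|^2<1\}$; $D^{IV}_k=\{Z\in\mathbb{C}^k: Z\overline{Z}^t<2,\ 1-Z\overline{Z}^t+\tfrac14|ZZ^t|^2>0\}$ (row vectors). Proper means preimages of compact sets are compact. *)

From Stdlib Require Import Reals Lra List.
Open Scope R_scope.

Record C : Type := mkC { Re : R; Im : R }.

Definition C0 : C := mkC 0 0.
Definition C1 : C := mkC 1 0.
Definition Ci : C := mkC 0 1.
Definition RtoC (r : R) : C := mkC r 0.
Definition Cadd (z w : C) : C := mkC (Re z + Re w) (Im z + Im w).
Definition Copp (z : C) : C := mkC (- Re z) (- Im z).
Definition Csub (z w : C) : C := Cadd z (Copp w).
Definition Cmul (z w : C) : C :=
  mkC (Re z * Re w - Im z * Im w) (Re z * Im w + Im z * Re w).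
Definition Cconj (z : C) : C := mkC (Re z) (- Im z).
Definition Cnorm2 (z : C) : R := Re z * Re z + Im z * Im z.
Definition Cabs (z : C) : R := sqrt (Cnorm2 z).
Definition Cinv (z : C) : C := mkC (Re z / Cnorm2 z) (- Im z / Cnorm2 z).
Definition Cdiv (z w : C) : C := Cmul z (Cinv w).
(** principal square root (branch with sqrt 1 = 1, cut along the negative reals) *)
Definition Csqrt (z : C) : C :=
  mkC (sqrt ((Cabs z + Re z) / 2))
      ((if Rlt_dec (Im z) 0 then -1 else 1) * sqrt ((Cabs z - Re z) / 2)).

Fixpoint sumR (k : nat) (f : nat -> R) : R :=
  match k with O => 0 | S k' => sumR k' f + f k' end.
Fixpoint sumC (k : nat) (f : nat -> C) : C :=
  match k with O => C0 | S k' => Cadd (sumC k' f) (f k') end.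

(** * The space C^k: points are functions nat -> C vanishing from index k on
    (coordinate z_{i+1} of the paper is [z i]). *)
Definition pt := nat -> C.
Definition inC (k : nat) (x : pt) : Prop := forall i, (k <= i)%nat -> x i = C0.
Definition zero_pt : pt := fun _ => C0.
Definition vnorm2 (k : nat) (x : pt) : R := sumR k (fun i => Cnorm2 (x i)).
Definition dist (k : nat) (x y : pt) : R := sqrt (vnorm2 k (fun i => Csub (x i) (y i))).

Definition ball (k : nat) (z : pt) : Prop := inC k z /\ vnorm2 k z < 1.

Definition ivform (k : nat) (Z : pt) : R :=
  1 - vnorm2 k Z + / 4 * Cnorm2 (sumC k (fun i => Cmul (Z i) (Z i))).
Definition DIV (k : nat) (Z : pt) : Prop :=
  inC k Z /\ vnorm2 k Z < 2 /\ ivform k Z > 0.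

Definition open_in (k : nat) (U : pt -> Prop) : Prop :=
  forall x, inC k x -> U x ->
    exists eps, eps > 0 /\ forall y, inC k y -> dist k x y < eps -> U y.
Definition compact (k : nat) (K : pt -> Prop) : Prop :=
  (forall x, K x -> inC k x) /\
  forall (I : Type) (U : I -> pt -> Prop),
    (forall i, open_in k (U i)) ->
    (forall x, K x -> exists i, U i x) ->
    exists l : list I, forall x, K x -> exists i, In i l /\ U i x.

Definition holomorphic_on (n k : nat) (D : pt -> Prop) (F : pt -> pt) : Prop :=
  forall z, D z ->
    exists A : nat -> nat -> C,
      forall eps, eps > 0 -> exists delta, delta > 0 /\
        forall h, inC n h -> sqrt (vnorm2 n h) < delta ->
          sqrt (vnorm2 k (fun i =>
              Csub (Csub (F (fun j => Cadd (z j) (h j)) i) (F z i))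
                   (sumC n (fun j => Cmul (A i j) (h j)))))
          <= eps * sqrt (vnorm2 n h).

Definition maps_into (D E : pt -> Prop) (F : pt -> pt) : Prop :=
  forall z, D z -> E (F z).

Definition proper_map (n k : nat) (D E : pt -> Prop) (F : pt -> pt) : Prop :=
  forall K, compact k K -> (forall w, K w -> E w) ->
    compact n (fun z => D z /\ K (F z)).

Definition proper_holomorphic (n k : nat) (E : pt -> Prop) (F : pt -> pt) : Prop :=
  holomorphic_on n k (ball n) F /\ maps_into (ball n) E F /\
  proper_map n k (ball n) E F.

Definition sq (z : C) : C := Cmul z z.
Definition half : C := RtoC (/ 2).

Definition H_map (m : nat) (G : pt -> pt) : pt -> pt := fun z i =>
  let g := G z in
  let s := sumC (m - 1) (fun j => sq (g j)) in
  let gm := g (m - 1)%nat in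
  let Pm := Cadd (Csub (Cmul half s) (sq gm)) gm in
  let Pm1 := Cmul Ci (Csub (Cadd (Cmul half s) (sq gm)) gm) in
  let Q := Cmul (RtoC (sqrt 2)) (Csub C1 gm) in
  if (i <? m - 1)%nat then g i
  else if (i =? m - 1)%nat then Cdiv Pm Q
  else if (i =? m)%nat then Cdiv Pm1 Q
  else C0.

Definition W_map (m : nat) (G : pt -> pt) : pt -> pt := fun z i =>
  let g := G z in
  if (i <? m)%nat then g i
  else if (i =? m)%nat then
    Csub C1 (Csqrt (Csub C1 (sumC m (fun j => sq (g j)))))
  else C0.

(* Both identities are algebraic.  For [W_G] put [s = sum_j g_j^2] and [r = sqrt (1 - s)]: the
   new coordinate is [1 - r] and [s + (1 - r)^2 = 2 (1 - r)], so the quadratic term of the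
   defining function cancels [|1 - r|^2]; for [H_G] the cancellation is a rational identity in [s]
   and [g_m].  Hence both maps send the ball into [D^IV], and their coordinates are built from
   the [g_j] by sums, products, quotients by [1 - g_m] and the principal square root on
   [Re > 0], all complex differentiable.  For properness, a compact [K] in [D^IV] has
   [ivform >= d > 0], so [|G|^2 <= 1 - d] on the preimage of [K]; since [G] is recovered from
   [Phi] by a coordinate contraction [psi], the preimage lies in the [G]-preimage of the compact
   set [psi K ∩ {|w|^2 <= 1 - d}] of the ball, and it is closed by continuity of [Phi]. *)

From Stdlib Require Import Reals Lra Lia Psatz Field ZArith List.
From Stdlib Require Import FunctionalExtensionality ClassicalEpsilon Classical.
(* [Defs] comes last so that its [C] shadows the binomial coefficient [C] of [Reals]. *)
From Pilot Require Import Defs.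
Open Scope R_scope.

(** * Complex arithmetic and finite sums *)

Lemma C_ext (x y : C) : Re x = Re y -> Im x = Im y -> x = y.
Proof. destruct x, y; simpl; intros; subst; reflexivity. Qed.

Ltac Cext := apply C_ext; simpl.

Lemma Cnorm2_ge0 z : 0 <= Cnorm2 z.
Proof. unfold Cnorm2; nra. Qed.

Lemma Cnorm2_eq0 z : Cnorm2 z = 0 -> z = C0.
Proof. destruct z as [a b]; unfold Cnorm2; simpl; intros; Cext; nra. Qed.

Lemma Cnorm2_pos z : z <> C0 -> 0 < Cnorm2 z.
Proof.
  intro Hz. destruct (Cnorm2_ge0 z) as [|E]; auto.
  exfalso; apply Hz, Cnorm2_eq0; auto.
Qed.

Lemma C_field : field_theory C0 C1 Cadd Cmul Csub Copp Cdiv Cinv (@eq C).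
Proof.
  constructor.
  - constructor; intros; unfold Cadd, Cmul, Csub, Copp, C0, C1; Cext; ring.
  - intro E; apply (f_equal Re) in E; simpl in E; lra.
  - reflexivity.
  - intros [a b] Hp. apply Cnorm2_pos in Hp.
    unfold Cinv, Cmul, C1, Cnorm2 in *; simpl in *. Cext; field; lra.
Qed.

Add Field Cfield : C_field.

Lemma Cnorm2_mul x y : Cnorm2 (Cmul x y) = Cnorm2 x * Cnorm2 y.
Proof. unfold Cnorm2, Cmul; simpl; ring. Qed.

Lemma Cnorm2_inv x : x <> C0 -> Cnorm2 (Cinv x) = / Cnorm2 x.
Proof.
  intro H. apply Cnorm2_pos in H. destruct x as [a b].
  unfold Cinv, Cnorm2 in *; simpl in *. field. lra.
Qed.

Lemma Cmul_neq0 x y : x <> C0 -> y <> C0 -> Cmul x y <> C0.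
Proof.
  intros Hx Hy E. apply Cnorm2_pos in Hx. apply Cnorm2_pos in Hy.
  assert (Cnorm2 (Cmul x y) = 0) as H0 by (rewrite E; unfold Cnorm2; simpl; ring).
  rewrite Cnorm2_mul in H0. nra.
Qed.

Lemma Csub1_neq0 w : Cnorm2 w < 1 -> Csub C1 w <> C0.
Proof.
  intros H E. replace w with C1 in H.
  - unfold Cnorm2 in H; simpl in H. lra.
  - replace w with (Csub C1 (Csub C1 w)) by field. rewrite E. field.
Qed.

Lemma Cabs_ge0 z : 0 <= Cabs z.
Proof. apply sqrt_pos. Qed.

Lemma Cabs_sq z : Cabs z * Cabs z = Cnorm2 z.
Proof. apply sqrt_sqrt, Cnorm2_ge0. Qed.

Lemma Cabs_C0 : Cabs C0 = 0.
Proof. unfold Cabs, Cnorm2; simpl. rewrite Rmult_0_l, Rplus_0_l. apply sqrt_0. Qed.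

Lemma Cabs_pos x : x <> C0 -> 0 < Cabs x.
Proof. intros. apply sqrt_lt_R0, Cnorm2_pos; auto. Qed.

Lemma Cabs_pos_neq0 x : 0 < Cabs x -> x <> C0.
Proof. intros H E. subst. rewrite Cabs_C0 in H. lra. Qed.

Lemma Cabs_mul x y : Cabs (Cmul x y) = Cabs x * Cabs y.
Proof. unfold Cabs; rewrite Cnorm2_mul; apply sqrt_mult; apply Cnorm2_ge0. Qed.

Lemma Cabs_inv x : x <> C0 -> Cabs (Cinv x) = / Cabs x.
Proof. intros. unfold Cabs. rewrite Cnorm2_inv by auto. apply sqrt_inv. Qed.

Lemma Cabs_div x y : y <> C0 -> Cabs (Cdiv x y) = Cabs x / Cabs y.
Proof. intros. unfold Cdiv. rewrite Cabs_mul, Cabs_inv by auto. reflexivity. Qed.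

Lemma Cabs_opp y : Cabs (Copp y) = Cabs y.
Proof. unfold Cabs, Cnorm2; simpl. f_equal; ring. Qed.

Lemma Cabs_conj y : Cabs (Cconj y) = Cabs y.
Proof. unfold Cabs, Cnorm2; simpl. f_equal; ring. Qed.

Lemma Cabs_two : Cabs (Cadd C1 C1) = 2.
Proof.
  unfold Cabs, Cnorm2; simpl.
  replace ((1 + 1) * (1 + 1) + (0 + 0) * (0 + 0)) with (2 * 2) by ring.
  apply sqrt_square; lra.
Qed.

Lemma Rabs_Re_le_Cabs z : Rabs (Re z) <= Cabs z.
Proof.
  unfold Cabs. rewrite <- sqrt_Rsqr_abs. apply sqrt_le_1_alt. unfold Rsqr, Cnorm2. nra.
Qed.

Lemma Rabs_Im_le_Cabs z : Rabs (Im z) <= Cabs z.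
Proof.
  unfold Cabs. rewrite <- sqrt_Rsqr_abs. apply sqrt_le_1_alt. unfold Rsqr, Cnorm2. nra.
Qed.

Lemma Re_Cabs_bounds z : - Cabs z <= Re z <= Cabs z.
Proof.
  pose proof (Rabs_Re_le_Cabs z). pose proof (Rle_abs (Re z)).
  pose proof (Rle_abs (- Re z)). rewrite Rabs_Ropp in *. lra.
Qed.

Lemma Re_le_Cabs z : Re z <= Cabs z.
Proof. apply Re_Cabs_bounds. Qed.

Lemma Cabs_triangle x y : Cabs (Cadd x y) <= Cabs x + Cabs y.
Proof.
  pose proof (Cabs_ge0 x); pose proof (Cabs_ge0 y).
  (* Cauchy-Schwarz is [Re (x * conj y) <= |x * conj y|]. *)
  pose proof (Re_le_Cabs (Cmul x (Cconj y))) as CS.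
  rewrite Cabs_mul, Cabs_conj in CS. simpl in CS.
  unfold Cabs at 1. rewrite <- (sqrt_square (Cabs x + Cabs y)) by lra.
  apply sqrt_le_1_alt.
  pose proof (Cabs_sq x); pose proof (Cabs_sq y). unfold Cnorm2 in *; simpl. nra.
Qed.

Lemma Cabs_le_sub_add x y : Cabs x <= Cabs (Csub x y) + Cabs y.
Proof. replace x with (Cadd (Csub x y) y) at 1 by field. apply Cabs_triangle. Qed.

Lemma Csqrt_sq x : Cmul (Csqrt x) (Csqrt x) = x.
Proof.
  destruct x as [a b]. set (x := {| Re := a; Im := b |}).
  pose proof (Re_Cabs_bounds x) as HRe. simpl in HRe.
  assert (HN : Cabs x * Cabs x = a * a + b * b) by (rewrite Cabs_sq; reflexivity).
  set (N := Cabs x) in *.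
  assert (A1 : 0 <= (N + a) / 2) by lra.
  assert (A2 : 0 <= (N - a) / 2) by lra.
  assert (Hp : sqrt ((N + a) / 2) * sqrt ((N + a) / 2) = (N + a) / 2) by (apply sqrt_sqrt; auto).
  assert (Hq : sqrt ((N - a) / 2) * sqrt ((N - a) / 2) = (N - a) / 2) by (apply sqrt_sqrt; auto).
  assert (Hpq : sqrt ((N + a) / 2) * sqrt ((N - a) / 2) = Rabs b / 2).
  { rewrite <- sqrt_mult by auto.
    replace ((N + a) / 2 * ((N - a) / 2)) with (Rsqr (b / 2)) by (unfold Rsqr; nra).
    rewrite sqrt_Rsqr_abs. unfold Rdiv. rewrite Rabs_mult, (Rabs_pos_eq (/ 2)); lra. }
  unfold Csqrt, Cmul. fold x N. Cext.
  - destruct (Rlt_dec b 0); nra.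
  - destruct (Rlt_dec b 0).
    + rewrite Rabs_left in Hpq by auto. nra.
    + rewrite Rabs_pos_eq in Hpq by lra. nra.
Qed.

Lemma Csqrt_Re_ge0 x : 0 <= Re (Csqrt x).
Proof. apply sqrt_pos. Qed.

Lemma Csqrt_Re_pos x : 0 < Re x -> 0 < Re (Csqrt x).
Proof.
  intros. apply sqrt_lt_R0. pose proof (Re_Cabs_bounds x). lra.
Qed.

Lemma sumR_ext k f g : (forall i, (i < k)%nat -> f i = g i) -> sumR k f = sumR k g.
Proof. induction k; simpl; intros; auto. rewrite IHk, H by (auto; lia). auto. Qed.

Lemma sumC_ext k f g : (forall i, (i < k)%nat -> f i = g i) -> sumC k f = sumC k g.
Proof. induction k; simpl; intros; auto. rewrite IHk, H by (auto; lia). auto. Qed.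

Lemma sumR_le k f g : (forall i, (i < k)%nat -> f i <= g i) -> sumR k f <= sumR k g.
Proof.
  induction k; simpl; intros H. lra.
  pose proof (H k ltac:(lia)). assert (sumR k f <= sumR k g) by (apply IHk; auto). lra.
Qed.

Lemma sumR_ge0 k f : (forall i, (i < k)%nat -> 0 <= f i) -> 0 <= sumR k f.
Proof.
  induction k; simpl; intros H. lra.
  pose proof (H k ltac:(lia)). assert (0 <= sumR k f) by (apply IHk; auto). lra.
Qed.

Lemma sumR_scal k c f : sumR k (fun i => c * f i) = c * sumR k f.
Proof. induction k; simpl. ring. rewrite IHk. ring. Qed.

Lemma Cabs_sumC k f : Cabs (sumC k f) <= sumR k (fun i => Cabs (f i)).
Proof.
  induction k; simpl. rewrite Cabs_C0; lra.
  eapply Rle_trans. apply Cabs_triangle. lra.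
Qed.

Lemma Cabs_sumC_sq k g : Cabs (sumC k (fun j => sq (g j))) <= vnorm2 k g.
Proof.
  eapply Rle_trans. apply Cabs_sumC. apply sumR_le. intros.
  unfold sq. rewrite Cabs_mul, Cabs_sq. lra.
Qed.

Lemma vnorm2_ge0 k x : 0 <= vnorm2 k x.
Proof. apply sumR_ge0. intros; apply Cnorm2_ge0. Qed.

Lemma Cnorm2_le_vnorm2 k x i : (i < k)%nat -> Cnorm2 (x i) <= vnorm2 k x.
Proof.
  unfold vnorm2. induction k; simpl; intros. lia.
  pose proof (vnorm2_ge0 k x). pose proof (Cnorm2_ge0 (x k)). unfold vnorm2 in *.
  destruct (Nat.eq_dec i k). subst; lra. pose proof (IHk ltac:(lia)). lra.
Qed.

Lemma Cabs_le_vnorm k x i : (i < k)%nat -> Cabs (x i) <= sqrt (vnorm2 k x).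
Proof. intros. apply sqrt_le_1_alt, Cnorm2_le_vnorm2; auto. Qed.

Lemma sqrt_vnorm2_le_sum_Cabs k x : sqrt (vnorm2 k x) <= sumR k (fun i => Cabs (x i)).
Proof.
  assert (Hs : vnorm2 k x <= sumR k (fun i => Cabs (x i)) * sumR k (fun i => Cabs (x i))
            /\ 0 <= sumR k (fun i => Cabs (x i))).
  { unfold vnorm2. induction k; simpl. lra.
    destruct IHk. pose proof (Cabs_sq (x k)). pose proof (Cabs_ge0 (x k)). nra. }
  destruct Hs. rewrite <- (sqrt_square (sumR k (fun i => Cabs (x i)))) by auto.
  apply sqrt_le_1_alt; auto.
Qed.

Lemma vnorm2_sub_sym k x y :
  vnorm2 k (fun i => Csub (x i) (y i)) = vnorm2 k (fun i => Csub (y i) (x i)).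
Proof. apply sumR_ext. intros. unfold Cnorm2; simpl. ring. Qed.

Lemma mul_frac_succ_le a e : 0 <= a -> 0 <= e -> a * (e / (a + 1)) <= e.
Proof.
  intros Ha He. replace (a * (e / (a + 1))) with (e - e / (a + 1)) by (field; lra).
  assert (0 <= e / (a + 1)) by (apply Rmult_le_pos; [lra|apply Rlt_le, Rinv_0_lt_compat; lra]). lra.
Qed.

(** * Complex differentiability *)

Definition Clin (n : nat) (a : nat -> C) (h : pt) : C := sumC n (fun j => Cmul (a j) (h j)).
Definition vnorm (n : nat) (h : pt) : R := sqrt (vnorm2 n h).
Definition Clin_bound (n : nat) (a : nat -> C) : R := sumR n (fun j => Cabs (a j)).

Lemma vnorm_ge0 n h : 0 <= vnorm n h.
Proof. apply sqrt_pos. Qed.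

Lemma Clin_bound_ge0 n a : 0 <= Clin_bound n a.
Proof. apply sumR_ge0; intros; apply Cabs_ge0. Qed.

Lemma Cabs_Clin_le n a h : Cabs (Clin n a h) <= Clin_bound n a * vnorm n h.
Proof.
  eapply Rle_trans. apply Cabs_sumC.
  unfold Clin_bound. rewrite Rmult_comm, <- sumR_scal. apply sumR_le. intros.
  rewrite Cabs_mul, Rmult_comm. apply Rmult_le_compat_r. apply Cabs_ge0.
  apply Cabs_le_vnorm; auto.
Qed.

Lemma Clin_add n a b h : Clin n (fun j => Cadd (a j) (b j)) h = Cadd (Clin n a h) (Clin n b h).
Proof. unfold Clin; induction n; simpl. Cext; ring. rewrite IHn. field. Qed.

Lemma Clin_scal n d a h : Clin n (fun j => Cmul d (a j)) h = Cmul d (Clin n a h).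
Proof. unfold Clin; induction n; simpl. Cext; ring. rewrite IHn. field. Qed.

Lemma Clin_zero n h : Clin n (fun _ => C0) h = C0.
Proof. unfold Clin; induction n; simpl. auto. rewrite IHn. field. Qed.

Definition has_Cdiff (n : nat) (f : pt -> C) (z : pt) (a : nat -> C) : Prop :=
  forall eps, eps > 0 -> exists delta, delta > 0 /\ forall h, inC n h -> vnorm n h < delta ->
    Cabs (Csub (Csub (f (fun j => Cadd (z j) (h j))) (f z)) (Clin n a h)) <= eps * vnorm n h.

Definition Cdifferentiable (n : nat) (f : pt -> C) (z : pt) : Prop := exists a, has_Cdiff n f z a.

Definition has_Cderive (phi : C -> C) (w d : C) : Prop :=
  forall eps, eps > 0 -> exists delta, delta > 0 /\ forall k, Cabs k < delta ->
    Cabs (Csub (Csub (phi (Cadd w k)) (phi w)) (Cmul d k)) <= eps * Cabs k.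

Lemma has_Cdiff_increment_le n f z a : has_Cdiff n f z a ->
  exists delta, delta > 0 /\ forall h, inC n h -> vnorm n h < delta ->
    Cabs (Csub (f (fun j => Cadd (z j) (h j))) (f z)) <= (1 + Clin_bound n a) * vnorm n h.
Proof.
  intros D. destruct (D 1 ltac:(lra)) as [d [Hd Hh]]. exists d; split; auto. intros h Hin Hlt.
  eapply Rle_trans. apply (Cabs_le_sub_add _ (Clin n a h)).
  pose proof (Hh h Hin Hlt). pose proof (Cabs_Clin_le n a h). lra.
Qed.

Lemma has_Cdiff_const n c z : has_Cdiff n (fun _ => c) z (fun _ => C0).
Proof.
  intros eps He. exists 1; split. lra. intros. rewrite Clin_zero.
  replace (Csub (Csub c c) C0) with C0 by field. rewrite Cabs_C0.
  pose proof (vnorm_ge0 n h). nra.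
Qed.

Lemma has_Cdiff_add n f g z a b : has_Cdiff n f z a -> has_Cdiff n g z b ->
  has_Cdiff n (fun x => Cadd (f x) (g x)) z (fun j => Cadd (a j) (b j)).
Proof.
  intros Df Dg eps He.
  destruct (Df (eps / 2) ltac:(lra)) as [d1 [H1 F1]].
  destruct (Dg (eps / 2) ltac:(lra)) as [d2 [H2 F2]].
  exists (Rmin d1 d2); split. apply Rmin_pos; auto. intros h Hh Hn.
  rewrite Clin_add.
  match goal with |- Cabs ?E <= _ => replace E with
    (Cadd (Csub (Csub (f (fun j => Cadd (z j) (h j))) (f z)) (Clin n a h))
          (Csub (Csub (g (fun j => Cadd (z j) (h j))) (g z)) (Clin n b h))) by field end.
  eapply Rle_trans. apply Cabs_triangle.
  pose proof (F1 h Hh (Rlt_le_trans _ _ _ Hn (Rmin_l _ _))).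
  pose proof (F2 h Hh (Rlt_le_trans _ _ _ Hn (Rmin_r _ _))). lra.
Qed.

Lemma has_Cdiff_comp n f z a phi d : has_Cdiff n f z a -> has_Cderive phi (f z) d ->
  has_Cdiff n (fun x => phi (f x)) z (fun j => Cmul d (a j)).
Proof.
  intros Df Dphi eps He.
  set (M := 1 + Clin_bound n a). assert (HM : 1 <= M) by (pose proof (Clin_bound_ge0 n a); unfold M; lra).
  pose proof (Cabs_ge0 d) as Hd.
  destruct (has_Cdiff_increment_le n f z a Df) as [d1 [Hd1 Lip]].
  destruct (Df (eps / 2 / (Cabs d + 1))) as [d2 [Hd2 Rem]].
  { apply Rdiv_lt_0_compat; lra. }
  destruct (Dphi (eps / 2 / M)) as [d3 [Hd3 Rphi]].
  { apply Rdiv_lt_0_compat; lra. }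
  exists (Rmin (Rmin d1 d2) (d3 / M)). split.
  { repeat apply Rmin_pos; auto. apply Rdiv_lt_0_compat; lra. }
  intros h Hh Hn.
  assert (Hn1 : vnorm n h < d1) by (eapply Rlt_le_trans; [exact Hn|]; eapply Rle_trans; apply Rmin_l).
  assert (Hn2 : vnorm n h < d2)
    by (eapply Rlt_le_trans; [exact Hn|]; eapply Rle_trans; [apply Rmin_l|apply Rmin_r]).
  assert (Hn3 : vnorm n h < d3 / M) by (eapply Rlt_le_trans; [exact Hn| apply Rmin_r]).
  pose proof (vnorm_ge0 n h) as Hn0.
  rewrite Clin_scal.
  set (w := f z). set (k := Csub (f (fun j => Cadd (z j) (h j))) w). set (L := Clin n a h).
  assert (Bk : Cabs k <= M * vnorm n h) by exact (Lip h Hh Hn1).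
  assert (Bk3 : Cabs k < d3).
  { apply Rle_lt_trans with (M * vnorm n h); auto.
    apply (Rmult_lt_compat_l M) in Hn3; [|lra].
    replace (M * (d3 / M)) with d3 in Hn3 by (field; lra). lra. }
  (* [phi (w + k) - phi w - d L] splits as the remainder of [phi] at [k] plus [d] times that of [f]. *)
  replace (f (fun j => Cadd (z j) (h j))) with (Cadd w k) by (unfold k; field).
  match goal with |- Cabs ?E <= _ => replace E with
    (Cadd (Csub (Csub (phi (Cadd w k)) (phi w)) (Cmul d k)) (Cmul d (Csub k L))) by field end.
  eapply Rle_trans. apply Cabs_triangle. rewrite Cabs_mul.
  assert (X1 : eps / 2 / M * Cabs k <= eps / 2 * vnorm n h).
  { apply Rle_trans with (eps / 2 / M * (M * vnorm n h)).
    - apply Rmult_le_compat_l; auto. apply Rlt_le, Rdiv_lt_0_compat; lra.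
    - right. field. lra. }
  assert (X2 : Cabs d * Cabs (Csub k L) <= eps / 2 * vnorm n h).
  { apply Rle_trans with (Cabs d * (eps / 2 / (Cabs d + 1) * vnorm n h)).
    - apply Rmult_le_compat_l; auto. exact (Rem h Hh Hn2).
    - rewrite <- Rmult_assoc. apply Rmult_le_compat_r; auto.
      apply mul_frac_succ_le; lra. }
  pose proof (Rphi k Bk3) as X3. fold w in X3. lra.
Qed.

Lemma has_Cderive_of_quadratic_remainder phi w d M delta : 0 <= M -> delta > 0 ->
  (forall k, Cabs k < delta ->
     Cabs (Csub (Csub (phi (Cadd w k)) (phi w)) (Cmul d k)) <= M * Cabs k * Cabs k) ->
  has_Cderive phi w d.
Proof.
  intros HM Hdelta Rem eps He. exists (Rmin delta (eps / (M + 1))). split.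
  { apply Rmin_pos; auto. apply Rdiv_lt_0_compat; lra. }
  intros k Hk. pose proof (Cabs_ge0 k).
  assert (Hk2 : Cabs k <= eps / (M + 1)) by (apply Rlt_le; eapply Rlt_le_trans; [exact Hk|apply Rmin_r]).
  eapply Rle_trans. apply Rem. eapply Rlt_le_trans; [exact Hk|apply Rmin_l].
  apply Rmult_le_compat_r; auto.
  eapply Rle_trans. apply Rmult_le_compat_l; [exact HM|exact Hk2].
  apply mul_frac_succ_le; lra.
Qed.

Lemma sq_div_le_of_le c x y : 0 < x -> x <= y -> c * c / y <= c * c / x.
Proof. intros. unfold Rdiv. apply Rmult_le_compat_l. nra. apply Rinv_le_contravar; lra. Qed.

Lemma has_Cderive_scal c w : has_Cderive (fun x => Cmul c x) w c.
Proof.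
  apply (has_Cderive_of_quadratic_remainder _ _ _ 0 1); try lra. intros.
  replace (Csub (Csub (Cmul c (Cadd w k)) (Cmul c w)) (Cmul c k)) with C0 by field.
  rewrite Cabs_C0. lra.
Qed.

Lemma has_Cderive_sq w : has_Cderive (fun x => Cmul x x) w (Cmul (Cadd C1 C1) w).
Proof.
  apply (has_Cderive_of_quadratic_remainder _ _ _ 1 1); try lra. intros.
  replace (Csub (Csub (Cmul (Cadd w k) (Cadd w k)) (Cmul w w)) (Cmul (Cmul (Cadd C1 C1) w) k))
    with (Cmul k k) by field. rewrite Cabs_mul. lra.
Qed.

Lemma has_Cderive_inv w : w <> C0 -> has_Cderive Cinv w (Copp (Cinv (Cmul w w))).
Proof.
  intros Hw. pose proof (Cabs_pos w Hw) as Pw.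
  apply (has_Cderive_of_quadratic_remainder _ _ _ (2 / (Cabs w * Cabs w * Cabs w)) (Cabs w / 2)).
  { apply Rlt_le, Rdiv_lt_0_compat; [lra|]. repeat apply Rmult_lt_0_compat; auto. }
  { lra. }
  intros k Hk.
  assert (Hwk : Cabs w / 2 <= Cabs (Cadd w k)).
  { pose proof (Cabs_le_sub_add w (Copp k)) as T.
    replace (Csub w (Copp k)) with (Cadd w k) in T by field. rewrite Cabs_opp in T. lra. }
  assert (Nwk : Cadd w k <> C0) by (apply Cabs_pos_neq0; lra).
  replace (Csub (Csub (Cinv (Cadd w k)) (Cinv w)) (Cmul (Copp (Cinv (Cmul w w))) k)) with
    (Cdiv (Cmul k k) (Cmul (Cmul w w) (Cadd w k))) by (field; auto).
  rewrite Cabs_div by (repeat apply Cmul_neq0; auto). rewrite !Cabs_mul.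
  eapply Rle_trans.
  - apply sq_div_le_of_le with (x := Cabs w * Cabs w * (Cabs w / 2)).
    + repeat apply Rmult_lt_0_compat; lra.
    + apply Rmult_le_compat_l; nra.
  - right. field. lra.
Qed.

Lemma has_Cderive_sqrt w : 0 < Re w -> has_Cderive Csqrt w (Cinv (Cmul (Cadd C1 C1) (Csqrt w))).
Proof.
  intros Hw. set (r := Csqrt w).
  assert (Hr : 0 < Re r) by (apply Csqrt_Re_pos; auto).
  assert (Hr0 : r <> C0) by (intro E; rewrite E in Hr; simpl in Hr; lra).
  pose proof (Cabs_pos r Hr0) as Par.
  assert (N2 : Cadd C1 C1 <> C0) by (apply Cabs_pos_neq0; rewrite Cabs_two; lra).
  apply (has_Cderive_of_quadratic_remainder _ _ _ (/ (2 * Cabs r * (Re r * Re r))) 1).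
  { apply Rlt_le, Rinv_0_lt_compat. repeat apply Rmult_lt_0_compat; lra. }
  { lra. }
  intros k _. fold r.
  pose proof (Csqrt_sq w) as Er. pose proof (Csqrt_sq (Cadd w k)) as Er'.
  pose proof (Csqrt_Re_ge0 (Cadd w k)) as Hr'.
  generalize dependent (Csqrt (Cadd w k)). intros r' Er' Hr'. fold r in Er.
  set (s := Cadd r' r).
  assert (Hs : Re r <= Cabs s) by (pose proof (Re_le_Cabs s); unfold s in *; simpl in *; lra).
  assert (Hs0 : s <> C0) by (apply Cabs_pos_neq0; lra).
  (* With [k = r'^2 - r^2] the remainder of the square root is [- k^2 / (2 r (r' + r)^2)]. *)
  assert (Hk : k = Csub (Cmul r' r') (Cmul r r)) by (rewrite Er, Er'; field).
  replace (Csub (Csub r' r) (Cmul (Cinv (Cmul (Cadd C1 C1) r)) k)) with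
    (Copp (Cdiv (Cmul k k) (Cmul (Cmul (Cadd C1 C1) r) (Cmul s s))))
    by (rewrite Hk; unfold s; field; repeat split; auto).
  rewrite Cabs_opp, Cabs_div by (repeat apply Cmul_neq0; auto).
  rewrite !Cabs_mul, Cabs_two.
  eapply Rle_trans.
  - apply sq_div_le_of_le with (x := 2 * Cabs r * (Re r * Re r)).
    + repeat apply Rmult_lt_0_compat; lra.
    + apply Rmult_le_compat_l; [lra|]. apply Rmult_le_compat; lra.
  - right. field. split; lra.
Qed.

Lemma Cdifferentiable_ext n f g z :
  (forall x, f x = g x) -> Cdifferentiable n f z -> Cdifferentiable n g z.
Proof. intros H. replace g with f; auto. apply functional_extensionality; auto. Qed.

Lemma Cdifferentiable_const n c z : Cdifferentiable n (fun _ => c) z.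
Proof. eexists; apply has_Cdiff_const. Qed.

Lemma Cdifferentiable_add n f g z : Cdifferentiable n f z -> Cdifferentiable n g z ->
  Cdifferentiable n (fun x => Cadd (f x) (g x)) z.
Proof. intros [a Ha] [b Hb]. eexists; apply has_Cdiff_add; eauto. Qed.

Lemma Cdifferentiable_comp n f z phi d : Cdifferentiable n f z -> has_Cderive phi (f z) d ->
  Cdifferentiable n (fun x => phi (f x)) z.
Proof. intros [a Ha] Hp. eexists; eapply has_Cdiff_comp; eauto. Qed.

Lemma Cdifferentiable_scal n f z c : Cdifferentiable n f z ->
  Cdifferentiable n (fun x => Cmul c (f x)) z.
Proof. intros. eapply Cdifferentiable_comp; eauto. apply has_Cderive_scal. Qed.

Lemma Cdifferentiable_sq n f z : Cdifferentiable n f z ->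
  Cdifferentiable n (fun x => Cmul (f x) (f x)) z.
Proof. intros. eapply Cdifferentiable_comp with (phi := fun x => Cmul x x); eauto. apply has_Cderive_sq. Qed.

Lemma Cdifferentiable_sub n f g z : Cdifferentiable n f z -> Cdifferentiable n g z ->
  Cdifferentiable n (fun x => Csub (f x) (g x)) z.
Proof.
  intros. apply Cdifferentiable_ext with (fun x => Cadd (f x) (Cmul (Copp C1) (g x))).
  intros; field. apply Cdifferentiable_add, Cdifferentiable_scal; auto.
Qed.

Lemma Cdifferentiable_mul n f g z : Cdifferentiable n f z -> Cdifferentiable n g z ->
  Cdifferentiable n (fun x => Cmul (f x) (g x)) z.
Proof.
  intros.
  (* polarization: [4 f g = (f + g)^2 - (f - g)^2] *)
  apply Cdifferentiable_ext with (fun x => Cmul (Cinv (Cadd (Cadd C1 C1) (Cadd C1 C1)))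
     (Csub (Cmul (Cadd (f x) (g x)) (Cadd (f x) (g x))) (Cmul (Csub (f x) (g x)) (Csub (f x) (g x))))).
  { intros; field. intro E; apply (f_equal Re) in E; simpl in E; lra. }
  apply Cdifferentiable_scal, Cdifferentiable_sub; apply Cdifferentiable_sq;
    [apply Cdifferentiable_add|apply Cdifferentiable_sub]; auto.
Qed.

Lemma Cdifferentiable_div n f g z : Cdifferentiable n f z -> Cdifferentiable n g z -> g z <> C0 ->
  Cdifferentiable n (fun x => Cdiv (f x) (g x)) z.
Proof.
  intros. apply Cdifferentiable_mul; auto.
  eapply Cdifferentiable_comp with (phi := Cinv); eauto. apply has_Cderive_inv; auto.
Qed.

Lemma Cdifferentiable_sqrt n f z : Cdifferentiable n f z -> 0 < Re (f z) ->
  Cdifferentiable n (fun x => Csqrt (f x)) z.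
Proof. intros. eapply Cdifferentiable_comp with (phi := Csqrt); eauto. apply has_Cderive_sqrt; auto. Qed.

Lemma Cdifferentiable_sumC n k (F : pt -> nat -> C) z :
  (forall j, (j < k)%nat -> Cdifferentiable n (fun x => F x j) z) ->
  Cdifferentiable n (fun x => sumC k (F x)) z.
Proof.
  induction k; simpl; intros. apply Cdifferentiable_const.
  apply Cdifferentiable_add; auto.
Qed.

Lemma holomorphic_on_component n k D F z i : holomorphic_on n k D F -> D z -> (i < k)%nat ->
  Cdifferentiable n (fun x => F x i) z.
Proof.
  intros HF Dz Hi. destruct (HF z Dz) as [A HA]. exists (A i). intros eps He.
  destruct (HA eps He) as [d [Hd Fd]]. exists d; split; auto. intros h Hh Hn.
  eapply Rle_trans; [| apply (Fd h Hh Hn)].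
  apply (Cabs_le_vnorm k (fun i => Csub (Csub (F (fun j => Cadd (z j) (h j)) i) (F z i))
                   (sumC n (fun j => Cmul (A i j) (h j)))) i Hi).
Qed.

Lemma sum_remainders_small n k F z A :
  (forall i, (i < k)%nat -> has_Cdiff n (fun x => F x i) z (A i)) ->
  forall eps, eps > 0 -> exists delta, delta > 0 /\ forall h, inC n h -> vnorm n h < delta ->
   sumR k (fun i => Cabs (Csub (Csub (F (fun j => Cadd (z j) (h j)) i) (F z i)) (Clin n (A i) h)))
     <= eps * vnorm n h.
Proof.
  induction k; intros HD eps He; simpl.
  - exists 1. split. lra. intros. pose proof (vnorm_ge0 n h). nra.
  - destruct (IHk (fun i Hi => HD i ltac:(lia)) (eps / 2) ltac:(lra)) as [d1 [H1 F1]].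
    destruct (HD k ltac:(lia) (eps / 2) ltac:(lra)) as [d2 [H2 F2]].
    exists (Rmin d1 d2). split. apply Rmin_pos; auto. intros h Hh Hn.
    pose proof (F1 h Hh (Rlt_le_trans _ _ _ Hn (Rmin_l _ _))).
    pose proof (F2 h Hh (Rlt_le_trans _ _ _ Hn (Rmin_r _ _))). lra.
Qed.

Lemma holomorphic_on_of_components n k (D : pt -> Prop) F :
  (forall z, D z -> forall i, (i < k)%nat -> Cdifferentiable n (fun x => F x i) z) ->
  holomorphic_on n k D F.
Proof.
  intros HD z Hz.
  assert (Ex : forall i, exists a, (i < k)%nat -> has_Cdiff n (fun x => F x i) z a).
  { intro i. destruct (Nat.lt_ge_cases i k) as [l|l].
    - destruct (HD z Hz i l) as [a Ha]. exists a; auto.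
    - exists (fun _ => C0). intro; lia. }
  destruct (choice _ Ex) as [A HA].
  exists A. intros eps He.
  destruct (sum_remainders_small n k F z A (fun i Hi => HA i Hi) eps He) as [d [Hd Fd]].
  exists d. split; auto. intros h Hh Hn.
  eapply Rle_trans; [apply sqrt_vnorm2_le_sum_Cabs | apply (Fd h Hh Hn)].
Qed.

Lemma sum_increments_le n k F z : (forall i, (i < k)%nat -> Cdifferentiable n (fun x => F x i) z) ->
  exists M delta, 0 <= M /\ delta > 0 /\ forall h, inC n h -> vnorm n h < delta ->
   sumR k (fun i => Cabs (Csub (F (fun j => Cadd (z j) (h j)) i) (F z i))) <= M * vnorm n h.
Proof.
  induction k; intros HD; simpl.
  - exists 0, 1. split. lra. split. lra. intros. lra.
  - destruct IHk as [M [d1 [HM [H1 F1]]]]. { intros; apply HD; lia. }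
    destruct (HD k ltac:(lia)) as [a Ha].
    destruct (has_Cdiff_increment_le _ _ _ _ Ha) as [d2 [H2 F2]].
    pose proof (Clin_bound_ge0 n a).
    exists (M + (1 + Clin_bound n a)), (Rmin d1 d2).
    split. lra. split. apply Rmin_pos; auto. intros h Hh Hn.
    pose proof (F1 h Hh (Rlt_le_trans _ _ _ Hn (Rmin_l _ _))).
    pose proof (F2 h Hh (Rlt_le_trans _ _ _ Hn (Rmin_r _ _))). lra.
Qed.

Lemma vnorm2_increment_small n k F z :
  (forall i, (i < k)%nat -> Cdifferentiable n (fun x => F x i) z) ->
  forall r, r > 0 -> exists delta, delta > 0 /\ forall h, inC n h -> vnorm n h < delta ->
    vnorm2 k (fun i => Csub (F (fun j => Cadd (z j) (h j)) i) (F z i)) < r.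
Proof.
  intros HD r Hr. destruct (sum_increments_le n k F z HD) as [M [d [HM [Hd Fd]]]].
  pose proof (sqrt_lt_R0 r Hr) as Hsr.
  exists (Rmin d (sqrt r / (M + 1))). split.
  { apply Rmin_pos; auto. apply Rdiv_lt_0_compat; lra. }
  intros h Hh Hn. apply sqrt_lt_0_alt.
  eapply Rle_lt_trans; [apply sqrt_vnorm2_le_sum_Cabs|].
  eapply Rle_lt_trans; [apply (Fd h Hh (Rlt_le_trans _ _ _ Hn (Rmin_l _ _)))|].
  assert (Hn2 : vnorm n h < sqrt r / (M + 1)) by (eapply Rlt_le_trans; [exact Hn|apply Rmin_r]).
  pose proof (vnorm_ge0 n h).
  apply Rle_lt_trans with ((M + 1) * vnorm n h). nra.
  apply (Rmult_lt_compat_l (M + 1)) in Hn2; [|lra].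
  replace ((M + 1) * (sqrt r / (M + 1))) with (sqrt r) in Hn2 by (field; lra). lra.
Qed.

(** * Continuity and compactness *)

Definition Rcont_at (k : nat) (f : pt -> R) (x : pt) : Prop :=
  forall eps, eps > 0 -> exists delta, delta > 0 /\ forall y, inC k y -> dist k x y < delta ->
    Rabs (f y - f x) < eps.

Definition Ccont_at (k : nat) (f : pt -> C) (x : pt) : Prop :=
  Rcont_at k (fun y => Re (f y)) x /\ Rcont_at k (fun y => Im (f y)) x.

Lemma Rcont_at_const k c x : Rcont_at k (fun _ => c) x.
Proof.
  intros eps He. exists 1. split. lra. intros.
  replace (c - c) with 0 by ring. rewrite Rabs_R0; lra.
Qed.

Lemma Rcont_at_plus k f g x : Rcont_at k f x -> Rcont_at k g x -> Rcont_at k (fun y => f y + g y) x.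
Proof.
  intros Hf Hg eps He. destruct (Hf (eps / 2) ltac:(lra)) as [d1 [H1 F1]].
  destruct (Hg (eps / 2) ltac:(lra)) as [d2 [H2 F2]].
  exists (Rmin d1 d2). split. apply Rmin_pos; auto. intros y Hy Hd.
  pose proof (F1 y Hy (Rlt_le_trans _ _ _ Hd (Rmin_l _ _))).
  pose proof (F2 y Hy (Rlt_le_trans _ _ _ Hd (Rmin_r _ _))).
  replace (f y + g y - (f x + g x)) with ((f y - f x) + (g y - g x)) by ring.
  eapply Rle_lt_trans. apply Rabs_triang. lra.
Qed.

Lemma Rcont_at_opp k f x : Rcont_at k f x -> Rcont_at k (fun y => - f y) x.
Proof.
  intros Hf eps He. destruct (Hf eps He) as [d [H F]]. exists d. split; auto. intros.
  replace (- f y - - f x) with (- (f y - f x)) by ring. rewrite Rabs_Ropp. auto.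
Qed.

Lemma Rcont_at_mult k f g x : Rcont_at k f x -> Rcont_at k g x -> Rcont_at k (fun y => f y * g y) x.
Proof.
  intros Hf Hg eps He.
  set (A := Rabs (f x)). set (B := Rabs (g x)).
  assert (HA : 0 <= A) by apply Rabs_pos. assert (HB : 0 <= B) by apply Rabs_pos.
  destruct (Hf (eps / 2 / (B + 1))) as [d1 [H1 F1]]. { apply Rdiv_lt_0_compat; lra. }
  destruct (Hg (Rmin 1 (eps / 2 / (A + 1)))) as [d2 [H2 F2]].
  { apply Rmin_pos; [lra|apply Rdiv_lt_0_compat; lra]. }
  exists (Rmin d1 d2). split. apply Rmin_pos; auto. intros y Hy Hd.
  pose proof (F1 y Hy (Rlt_le_trans _ _ _ Hd (Rmin_l _ _))) as B1.
  pose proof (F2 y Hy (Rlt_le_trans _ _ _ Hd (Rmin_r _ _))) as B2.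
  pose proof (Rmin_l 1 (eps / 2 / (A + 1))). pose proof (Rmin_r 1 (eps / 2 / (A + 1))).
  replace (f y * g y - f x * g x) with ((f y - f x) * g y + f x * (g y - g x)) by ring.
  eapply Rle_lt_trans. apply Rabs_triang. rewrite !Rabs_mult.
  assert (Hgy : Rabs (g y) <= B + 1).
  { replace (g y) with (g x + (g y - g x)) by ring.
    eapply Rle_trans. apply Rabs_triang. unfold B. lra. }
  assert (X1 : Rabs (f y - f x) * Rabs (g y) <= eps / 2).
  { eapply Rle_trans. apply Rmult_le_compat; try apply Rabs_pos; [apply Rlt_le, B1|exact Hgy].
    right. field. lra. }
  assert (X2 : A * Rabs (g y - g x) < eps / 2).
  { destruct (Rle_lt_or_eq_dec 0 A HA) as [HA'|HA'].
    - eapply Rlt_le_trans. apply Rmult_lt_compat_l; [exact HA'|]. eapply Rlt_le_trans; [exact B2|].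
      apply Rmin_r. apply mul_frac_succ_le; lra.
    - rewrite <- HA'. lra. }
  fold A. lra.
Qed.

Lemma Rcont_at_sumR k n F x : (forall i, (i < n)%nat -> Rcont_at k (fun y => F y i) x) ->
  Rcont_at k (fun y => sumR n (F y)) x.
Proof.
  induction n; simpl; intros. apply Rcont_at_const.
  apply Rcont_at_plus; auto.
Qed.

Lemma Cabs_coord_le_dist k x y i : (i < k)%nat -> Cabs (Csub (x i) (y i)) <= dist k x y.
Proof. intros. apply (Cabs_le_vnorm k (fun i => Csub (x i) (y i))); auto. Qed.

Lemma Ccont_at_coord k i x : (i < k)%nat -> Ccont_at k (fun y => y i) x.
Proof.
  intros Hi. pose proof Rabs_Re_le_Cabs; pose proof Rabs_Im_le_Cabs.
  split; intros eps He; exists eps; split; auto; intros y Hy Hd;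
    pose proof (Cabs_coord_le_dist k x y i Hi); rewrite Rabs_minus_sym.
  - specialize (H (Csub (x i) (y i))). simpl in H. unfold Rminus. lra.
  - specialize (H0 (Csub (x i) (y i))). simpl in H0. unfold Rminus. lra.
Qed.

Lemma Ccont_at_const k c x : Ccont_at k (fun _ => c) x.
Proof. split; apply Rcont_at_const. Qed.

Lemma Ccont_at_add k f g x : Ccont_at k f x -> Ccont_at k g x -> Ccont_at k (fun y => Cadd (f y) (g y)) x.
Proof. intros [] []. split; simpl; apply Rcont_at_plus; auto. Qed.

Lemma Ccont_at_sub k f g x : Ccont_at k f x -> Ccont_at k g x -> Ccont_at k (fun y => Csub (f y) (g y)) x.
Proof. intros [] []. split; simpl; apply Rcont_at_plus; auto; apply Rcont_at_opp; auto. Qed.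

Lemma Ccont_at_mul k f g x : Ccont_at k f x -> Ccont_at k g x -> Ccont_at k (fun y => Cmul (f y) (g y)) x.
Proof.
  intros [] []. split; simpl; apply Rcont_at_plus;
    try apply Rcont_at_opp; apply Rcont_at_mult; auto.
Qed.

Lemma Ccont_at_sumC k n F x : (forall i, (i < n)%nat -> Ccont_at k (fun y => F y i) x) ->
  Ccont_at k (fun y => sumC n (F y)) x.
Proof.
  induction n; simpl; intros. apply Ccont_at_const.
  apply Ccont_at_add; auto.
Qed.

Lemma Rcont_at_Cnorm2 k f x : Ccont_at k f x -> Rcont_at k (fun y => Cnorm2 (f y)) x.
Proof. intros []. apply Rcont_at_plus; apply Rcont_at_mult; auto. Qed.

Lemma Rcont_at_vnorm2 k m F x : (forall i, (i < m)%nat -> Ccont_at k (fun y => F y i) x) ->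
  Rcont_at k (fun y => vnorm2 m (F y)) x.
Proof.
  intros. apply Rcont_at_sumR with (F := fun y i => Cnorm2 (F y i)). intros.
  apply Rcont_at_Cnorm2; auto.
Qed.

Lemma Rcont_at_ivform k x : Rcont_at k (ivform k) x.
Proof.
  repeat apply Rcont_at_plus.
  - apply Rcont_at_const.
  - apply Rcont_at_opp, Rcont_at_vnorm2. intros; apply Ccont_at_coord; auto.
  - apply Rcont_at_mult. apply Rcont_at_const.
    apply Rcont_at_Cnorm2, Ccont_at_sumC with (F := fun y i => Cmul (y i) (y i)).
    intros. apply Ccont_at_mul; apply Ccont_at_coord; auto.
Qed.

Lemma open_in_gt k f c : (forall x, inC k x -> Rcont_at k f x) -> open_in k (fun y => f y > c).
Proof.
  intros Hc x Hx Hfx. destruct (Hc x Hx (f x - c) ltac:(lra)) as [d [Hd F]].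
  exists d. split; auto. intros y Hy Hdy. pose proof (F y Hy Hdy) as Hf.
  rewrite Rabs_minus_sym in Hf. pose proof (Rle_abs (f x - f y)). lra.
Qed.

Lemma in_le_fold_max (l : list nat) i : In i l -> (i <= fold_right Nat.max 0%nat l)%nat.
Proof. induction l; simpl; intros. contradiction. destruct H. subst; lia. specialize (IHl H). lia. Qed.

(* Cover [K] by the open sets [{f > 1 / (j + 1)}]; a finite subcover gives the bound. *)
Lemma compact_pos_lower_bound k K f : compact k K -> (forall x, inC k x -> Rcont_at k f x) ->
  (forall Z, K Z -> f Z > 0) -> exists delta, delta > 0 /\ forall Z, K Z -> delta <= f Z.
Proof.
  intros [Hsub Hcov] Hc Hpos.
  destruct (Hcov nat (fun j y => f y > / (INR j + 1))) as [l Hl].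
  - intros j. apply open_in_gt; auto.
  - intros x Kx. pose proof (Hpos x Kx) as Hfx. destruct (archimed (/ f x)) as [H1 _].
    pose proof (Rinv_0_lt_compat _ Hfx).
    exists (Z.to_nat (up (/ f x))). rewrite INR_IZR_INZ, Z2Nat.id by (apply le_IZR; lra).
    rewrite <- (Rinv_inv (f x)) at 1.
    apply Rinv_lt_contravar; [apply Rmult_lt_0_compat|]; lra.
  - set (N := fold_right Nat.max 0%nat l). exists (/ (INR N + 1)). split.
    { apply Rinv_0_lt_compat. pose proof (pos_INR N); lra. }
    intros Z KZ. destruct (Hl Z KZ) as [j [Hj Uj]]. apply in_le_fold_max, le_INR in Hj.
    apply Rlt_le. eapply Rle_lt_trans; [|exact Uj].
    apply Rinv_le_contravar; pose proof (pos_INR j); fold N in Hj; lra.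
Qed.

Lemma pt_eq_of_vnorm2_sub_eq0 k z y : inC k z -> inC k y ->
  vnorm2 k (fun i => Csub (z i) (y i)) = 0 -> z = y.
Proof.
  intros Hz Hy H. apply functional_extensionality. intro i.
  destruct (Nat.lt_ge_cases i k).
  - pose proof (Cnorm2_le_vnorm2 k (fun i => Csub (z i) (y i)) i H0) as Hi. simpl in Hi.
    pose proof (Cnorm2_ge0 (Csub (z i) (y i))).
    assert (E : Csub (z i) (y i) = C0) by (apply Cnorm2_eq0; lra).
    replace (z i) with (Cadd (Csub (z i) (y i)) (y i)) by field. rewrite E. field.
  - rewrite Hz, Hy; auto.
Qed.

Lemma compact_avoids_nbhd k K y : compact k K -> inC k y -> ~ K y ->
  exists r, r > 0 /\ forall z, inC k z -> vnorm2 k (fun i => Csub (z i) (y i)) < r -> ~ K z.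
Proof.
  intros HK Hy Ny.
  destruct (compact_pos_lower_bound k K (fun z => vnorm2 k (fun i => Csub (z i) (y i))) HK)
    as [d [Hd F]].
  - intros. apply Rcont_at_vnorm2. intros.
    apply Ccont_at_sub; [apply Ccont_at_coord; auto|apply Ccont_at_const].
  - intros Z KZ. destruct (vnorm2_ge0 k (fun i => Csub (Z i) (y i))) as [|E]; auto.
    exfalso. apply Ny. replace y with Z; auto.
    apply (pt_eq_of_vnorm2_sub_eq0 k); auto. apply HK; auto.
  - exists d. split; auto. intros z Hz Hlt Kz. pose proof (F z Kz). simpl in *. lra.
Qed.

Lemma compact_of_closed_subset k T S : compact k T -> (forall x, S x -> T x) ->
  open_in k (fun x => ~ S x) -> compact k S.
Proof.
  intros [Hsub Hcov] HST Hop. split. { intros; apply Hsub, HST; auto. }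
  intros I U HU Hc.
  destruct (Hcov (option I) (fun o => match o with Some i => U i | None => fun x => ~ S x end))
    as [l Hl].
  - intros [i|]; auto.
  - intros x Tx. destruct (classic (S x)) as [Sx|Sx].
    + destruct (Hc x Sx) as [i Hi]. exists (Some i); auto.
    + exists None; auto.
  - exists (flat_map (fun o => match o with Some i => i :: nil | None => nil end) l).
    intros x Sx. destruct (Hl x (HST x Sx)) as [[i|] [Hi Ui]]; [|contradiction].
    exists i; split; auto. apply in_flat_map. exists (Some i). simpl; auto.
Qed.

Lemma compact_image_contraction k m K (psi : pt -> pt) : compact k K ->
  (forall Z, inC m (psi Z)) ->
  (forall x y, vnorm2 m (fun i => Csub (psi x i) (psi y i)) <= vnorm2 k (fun i => Csub (x i) (y i))) ->
  compact m (fun w => exists Z, K Z /\ w = psi Z).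
Proof.
  intros [Hsub Hcov] Hin Hlip. split. { intros w [Z [_ E]]; subst; auto. }
  intros I U HU Hc.
  destruct (Hcov I (fun i Z => U i (psi Z))) as [l Hl].
  - intros i x Hx Ux. destruct (HU i (psi x) (Hin x) Ux) as [e [He F]].
    exists e. split; auto. intros y Hy Hd. apply F; auto.
    eapply Rle_lt_trans; [|exact Hd]. apply sqrt_le_1_alt, Hlip.
  - intros Z KZ. apply Hc. exists Z; auto.
  - exists l. intros w [Z [KZ E]]. subst. auto.
Qed.

Lemma compact_diff_open k T V : compact k T -> open_in k V -> compact k (fun x => T x /\ ~ V x).
Proof.
  intros HT HV. apply (compact_of_closed_subset k T); [auto|intros x []; auto|].
  intros x Hx Nx. destruct (classic (T x)) as [Tx|Tx].
  - assert (Vx : V x) by (apply NNPP; intro; apply Nx; auto).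
    destruct (HV x Hx Vx) as [e [He F]].
    exists e. split; auto. intros y Hy Hd [_ Hy']. apply Hy'; auto.
  - destruct (compact_avoids_nbhd k T x HT Hx Tx) as [r [Hr F]].
    exists (sqrt r). split. { apply sqrt_lt_R0; auto. }
    intros y Hy Hd [Ty _]. apply (F y Hy); auto.
    apply sqrt_lt_0_alt. rewrite vnorm2_sub_sym. exact Hd.
Qed.

(** * Proper holomorphic maps into D^IV *)

Lemma preimage_complement_nbhd n k K Phi x : compact k K -> (forall z, inC k (Phi z)) ->
  (forall i, (i < k)%nat -> Cdifferentiable n (fun z => Phi z i) x) ->
  inC n x -> ~ K (Phi x) ->
  exists e, e > 0 /\ forall y, inC n y -> dist n x y < e -> ~ K (Phi y).
Proof.
  intros HK HPhi HD Hx NK.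
  destruct (compact_avoids_nbhd k K (Phi x) HK (HPhi x) NK) as [r [Hr Fr]].
  destruct (vnorm2_increment_small n k Phi x HD r Hr) as [e [He Fe]].
  exists e. split; auto. intros y Hy Hdy.
  set (h := fun j => Csub (y j) (x j)).
  assert (Eh : (fun j => Cadd (x j) (h j)) = y).
  { apply functional_extensionality; intro j. unfold h. field. }
  assert (Hh : inC n h). { intros i Hi. unfold h. rewrite Hx, Hy by auto. unfold C0. Cext; ring. }
  assert (Hn : vnorm n h < e) by (unfold vnorm, h; rewrite <- vnorm2_sub_sym; auto).
  pose proof (Fe h Hh Hn) as Hsmall. rewrite Eh in Hsmall.
  apply (Fr (Phi y) (HPhi y) Hsmall).
Qed.

Lemma proper_map_DIV_of_ivform m n k G Phi psi :
  proper_map n m (ball n) (ball m) G ->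
  (forall z, ball n z -> G z = psi (Phi z)) ->
  (forall z, ball n z -> ivform k (Phi z) = 1 - vnorm2 m (G z)) ->
  (forall Z, inC m (psi Z)) ->
  (forall x y, vnorm2 m (fun i => Csub (psi x i) (psi y i)) <= vnorm2 k (fun i => Csub (x i) (y i))) ->
  (forall z, inC k (Phi z)) ->
  (forall z, ball n z -> forall i, (i < k)%nat -> Cdifferentiable n (fun x => Phi x i) z) ->
  proper_map n k (ball n) (DIV k) Phi.
Proof.
  intros HG Epsi Eiv Hpsi Hlip HPhi HD K HK HKD.
  destruct (compact_pos_lower_bound k K (ivform k) HK) as [d [Hd Fd]].
  { intros; apply Rcont_at_ivform. }
  { intros Z KZ. apply HKD; auto. }
  set (K' := fun w => (exists Z, K Z /\ w = psi Z) /\ ~ (vnorm2 m w > 1 - d)).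
  assert (CK' : compact m K').
  { apply compact_diff_open. apply (compact_image_contraction k); auto.
    apply open_in_gt. intros. apply Rcont_at_vnorm2. intros; apply Ccont_at_coord; auto. }
  assert (K'_ball : forall w, K' w -> ball m w).
  { intros w [[Z [_ E]] Hn]. subst. split; auto. lra. }
  assert (K'_G : forall z, ball n z -> K (Phi z) -> K' (G z)).
  { intros z Bz Kz. split. exists (Phi z); auto.
    pose proof (Eiv z Bz). pose proof (Fd _ Kz). lra. }
  apply (compact_of_closed_subset n (fun z => ball n z /\ K' (G z))).
  - apply HG; auto.
  - intros z [Bz Kz]; auto.
  - intros x Hx Nx. destruct (classic (ball n x)) as [Bx|Bx].
    + destruct (preimage_complement_nbhd n k K Phi x HK HPhi (HD x Bx) Hx) as [e [He Fe]].
      { intro; apply Nx; auto. }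
      exists e. split; auto. intros y Hy Hdy [_ Ky]. apply (Fe y Hy Hdy Ky).
    + destruct (compact_avoids_nbhd n _ x (HG K' CK' K'_ball) Hx) as [r [Hr Fr]].
      { intros []; auto. }
      exists (sqrt r). split. { apply sqrt_lt_R0; auto. }
      intros y Hy Hdy [By Ky]. apply (Fr y Hy).
      * apply sqrt_lt_0_alt. rewrite vnorm2_sub_sym. exact Hdy.
      * split; auto.
Qed.

Lemma proper_holomorphic_DIV_of_ivform m n k G Phi psi :
  proper_holomorphic n m (ball m) G ->
  (forall z, ball n z -> G z = psi (Phi z)) ->
  (forall z, ball n z -> ivform k (Phi z) = 1 - vnorm2 m (G z)) ->
  (forall z, ball n z -> vnorm2 k (Phi z) < 2) ->
  (forall Z, inC m (psi Z)) ->
  (forall x y, vnorm2 m (fun i => Csub (psi x i) (psi y i)) <= vnorm2 k (fun i => Csub (x i) (y i))) ->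
  (forall z, inC k (Phi z)) ->
  (forall z, ball n z -> forall i, (i < k)%nat -> Cdifferentiable n (fun x => Phi x i) z) ->
  proper_holomorphic n k (DIV k) Phi.
Proof.
  intros [_ [HGball HGprop]] Epsi Eiv Hlt2 Hpsi Hlip HPhi HD. split; [|split].
  - apply holomorphic_on_of_components; auto.
  - intros z Bz. split; [auto|split; [auto|]].
    rewrite Eiv by auto. destruct (HGball z Bz). lra.
  - apply (proper_map_DIV_of_ivform m n k G Phi psi); auto.
Qed.

Lemma Cdifferentiable_of_proper_holomorphic n m E G z j : proper_holomorphic n m E G ->
  ball n z -> (j < m)%nat -> Cdifferentiable n (fun x => G x j) z.
Proof. intros [HG _] Bz Hj. eapply holomorphic_on_component; eauto. Qed.

Definition sumsq (p : nat) (g : pt) : C := sumC p (fun j => sq (g j)).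

Lemma Cdifferentiable_sumsq n p G z :
  (forall j, (j < p)%nat -> Cdifferentiable n (fun x => G x j) z) ->
  Cdifferentiable n (fun x => sumsq p (G x)) z.
Proof.
  intros. apply Cdifferentiable_sumC with (F := fun x j => sq (G x j)).
  intros. apply Cdifferentiable_mul; auto.
Qed.

Lemma Re_one_sub_sumsq_pos p g : vnorm2 p g < 1 -> 0 < Re (Csub C1 (sumsq p g)).
Proof.
  intros. pose proof (Cabs_sumC_sq p g). pose proof (Re_le_Cabs (sumsq p g)).
  unfold sumsq in *. simpl. lra.
Qed.

(** * The map H_G *)

Definition Pm (s w : C) : C := Cadd (Csub (Cmul half s) (sq w)) w.
Definition Pm1 (s w : C) : C := Cmul Ci (Csub (Cadd (Cmul half s) (sq w)) w).
Definition sqrt2 : C := RtoC (sqrt 2).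

Lemma H_map_lt p G z i : (i < p)%nat -> H_map (S p) G z i = G z i.
Proof.
  intros. unfold H_map. replace (S p - 1)%nat with p by lia.
  destruct (Nat.ltb_spec i p); [auto|lia].
Qed.

Lemma H_map_p p G z :
  H_map (S p) G z p = Cdiv (Pm (sumsq p (G z)) (G z p)) (Cmul sqrt2 (Csub C1 (G z p))).
Proof.
  unfold H_map. replace (S p - 1)%nat with p by lia.
  rewrite Nat.ltb_irrefl, Nat.eqb_refl. reflexivity.
Qed.

Lemma H_map_Sp p G z :
  H_map (S p) G z (S p) = Cdiv (Pm1 (sumsq p (G z)) (G z p)) (Cmul sqrt2 (Csub C1 (G z p))).
Proof.
  unfold H_map. replace (S p - 1)%nat with p by lia.
  destruct (Nat.ltb_spec (S p) p); [lia|]. destruct (Nat.eqb_spec (S p) p); [lia|].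
  rewrite Nat.eqb_refl. reflexivity.
Qed.

Lemma H_map_inC p G z : inC (S (S p)) (H_map (S p) G z).
Proof.
  intros i Hi. unfold H_map. replace (S p - 1)%nat with p by lia.
  destruct (Nat.ltb_spec i p); [lia|]. destruct (Nat.eqb_spec i p); [lia|].
  destruct (Nat.eqb_spec i (S p)); [lia|]. auto.
Qed.

Lemma sqrt2_neq0 : sqrt2 <> C0.
Proof. intro E. apply (f_equal Re) in E. simpl in E. pose proof (sqrt_lt_R0 2). lra. Qed.

Lemma sqrt2_sq : Cmul sqrt2 sqrt2 = Cadd C1 C1.
Proof. unfold sqrt2, RtoC, Cmul. Cext; [rewrite sqrt_sqrt|]; lra. Qed.

Lemma Cdiv_sqrt2_mul P Y : Y <> C0 -> Cdiv P (Cmul sqrt2 Y) = Cmul (Cinv sqrt2) (Cdiv P Y).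
Proof. intros. field. split; auto. apply sqrt2_neq0. Qed.

Lemma sq_Cinv_sqrt2_mul Z : sq (Cmul (Cinv sqrt2) Z) = Cmul (Cinv (Cadd C1 C1)) (sq Z).
Proof. unfold sq. rewrite <- sqrt2_sq. field. apply sqrt2_neq0. Qed.

Lemma Cnorm2_Cinv_sqrt2_mul Z : Cnorm2 (Cmul (Cinv sqrt2) Z) = / 2 * Cnorm2 Z.
Proof.
  rewrite Cnorm2_mul, Cnorm2_inv by apply sqrt2_neq0.
  unfold sqrt2, Cnorm2; simpl. rewrite Rmult_0_l, Rplus_0_r, sqrt_sqrt; lra.
Qed.

Ltac expand_C := unfold Pm, Pm1, Cdiv, Cinv, Cnorm2, sq, half, Cmul, Cadd, Csub, Copp, Ci, C1, RtoC in *; simpl in *.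

Lemma H_ivform_identity (s w : C) (a : R) : Csub C1 w <> C0 ->
  1 - (a + / 2 * Cnorm2 (Cdiv (Pm s w) (Csub C1 w)) + / 2 * Cnorm2 (Cdiv (Pm1 s w) (Csub C1 w)))
  + / 4 * Cnorm2 (Cadd (Cadd s (Cmul (Cinv (Cadd C1 C1)) (sq (Cdiv (Pm s w) (Csub C1 w)))))
                       (Cmul (Cinv (Cadd C1 C1)) (sq (Cdiv (Pm1 s w) (Csub C1 w)))))
  = 1 - (a + Cnorm2 w).
Proof.
  intro H. apply Cnorm2_pos in H. destruct s as [s1 s2], w as [u v]. expand_C. field. lra.
Qed.

Lemma H_last_norm2_identity (s w : C) : Csub C1 w <> C0 ->
  / 2 * Cnorm2 (Cdiv (Pm s w) (Csub C1 w)) + / 2 * Cnorm2 (Cdiv (Pm1 s w) (Csub C1 w))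
  = Cnorm2 w + Cnorm2 s / (4 * Cnorm2 (Csub C1 w)).
Proof.
  intro H. apply Cnorm2_pos in H. destruct s as [s1 s2], w as [u v]. expand_C. field. lra.
Qed.

Lemma H_last_recover (s w : C) : Csub C1 w <> C0 ->
  w = Cmul (Cinv (Cadd C1 C1))
        (Cadd (Cdiv (Pm s w) (Csub C1 w)) (Cmul Ci (Cdiv (Pm1 s w) (Csub C1 w)))).
Proof.
  intro H. apply Cnorm2_pos in H. destruct s as [s1 s2], w as [u v]. expand_C. Cext; field; lra.
Qed.

Lemma H_ivform p G z : Csub C1 (G z p) <> C0 ->
  ivform (S (S p)) (H_map (S p) G z) = 1 - vnorm2 (S p) (G z).
Proof.
  intros Hw. unfold ivform, vnorm2. cbn [sumR sumC].
  rewrite (sumR_ext p _ (fun i => Cnorm2 (G z i))) by (intros; rewrite H_map_lt; auto).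
  rewrite (sumC_ext p _ (fun i => sq (G z i))) by (intros; rewrite H_map_lt; auto).
  rewrite H_map_p, H_map_Sp, !Cdiv_sqrt2_mul, !Cnorm2_Cinv_sqrt2_mul by auto.
  change (Cmul ?x ?x) with (sq x). rewrite !sq_Cinv_sqrt2_mul.
  apply H_ivform_identity; auto.
Qed.

Lemma H_norm2_bound a r S N : 0 <= a -> 0 <= r -> a + r * r < 1 -> 0 <= S -> S <= a * a ->
  (1 - r) * (1 - r) <= N -> a + (r * r + S / (4 * N)) < 2.
Proof.
  intros Ha Hr Har HS0 HS HN.
  assert (Hr1 : r < 1) by nra.
  assert (Hq : S / (4 * N) <= (1 + r) * (1 + r) / 4).
  { apply Rle_trans with (a * a / (4 * ((1 - r) * (1 - r)))).
    - unfold Rdiv. apply Rmult_le_compat; auto; [apply Rlt_le, Rinv_0_lt_compat; nra|].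
      apply Rinv_le_contravar; nra.
    - assert (a <= (1 - r) * (1 + r)) by nra.
      apply Rle_trans with ((1 - r) * (1 + r) * ((1 - r) * (1 + r)) / (4 * ((1 - r) * (1 - r)))).
      + unfold Rdiv. apply Rmult_le_compat_r; [apply Rlt_le, Rinv_0_lt_compat; nra|].
        apply Rmult_le_compat; lra.
      + right. field. lra. }
  nra.
Qed.

Lemma H_norm_lt2 p G z : vnorm2 (S p) (G z) < 1 -> vnorm2 (S (S p)) (H_map (S p) G z) < 2.
Proof.
  intros Hn. set (w := G z p). set (r := Cabs w).
  assert (Ha : 0 <= vnorm2 p (G z)) by apply vnorm2_ge0.
  assert (Hr : r * r = Cnorm2 w) by apply Cabs_sq.
  assert (Hr0 : 0 <= r) by apply Cabs_ge0.
  assert (Hs : Cabs (sumsq p (G z)) <= vnorm2 p (G z)) by apply Cabs_sumC_sq.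
  assert (HN : (1 - r) * (1 - r) <= Cnorm2 (Csub C1 w)).
  { pose proof (Re_le_Cabs w). unfold Cnorm2 in *; simpl. nra. }
  assert (Hw : Csub C1 w <> C0).
  { apply Csub1_neq0. pose proof (Cnorm2_le_vnorm2 (S p) (G z) p ltac:(lia)). unfold w. lra. }
  unfold vnorm2 at 1. cbn [sumR].
  rewrite (sumR_ext p _ (fun i => Cnorm2 (G z i))) by (intros; rewrite H_map_lt; auto).
  rewrite H_map_p, H_map_Sp, !Cdiv_sqrt2_mul, !Cnorm2_Cinv_sqrt2_mul by auto.
  rewrite Rplus_assoc. fold w. rewrite H_last_norm2_identity by auto. rewrite <- Hr.
  apply H_norm2_bound; auto.
  - unfold vnorm2 in Hn. simpl in Hn. fold w in Hn. rewrite <- Hr in Hn. exact Hn.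
  - apply Cnorm2_ge0.
  - rewrite <- Cabs_sq. pose proof (Cabs_ge0 (sumsq p (G z))). apply Rmult_le_compat; auto.
Qed.

Definition psiH (p : nat) (Z : pt) : pt := fun i =>
  if (i <? p)%nat then Z i
  else if (i =? p)%nat then Cmul (Cinv sqrt2) (Cadd (Z p) (Cmul Ci (Z (S p))))
  else C0.

Lemma psiH_contraction p x y :
  vnorm2 (S p) (fun i => Csub (psiH p x i) (psiH p y i))
  <= vnorm2 (S (S p)) (fun i => Csub (x i) (y i)).
Proof.
  unfold vnorm2. cbn [sumR].
  rewrite (sumR_ext p _ (fun i => Cnorm2 (Csub (x i) (y i)))).
  2:{ intros. unfold psiH. destruct (Nat.ltb_spec i p); [auto|lia]. }
  unfold psiH at 1 2. rewrite Nat.ltb_irrefl, Nat.eqb_refl.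
  replace (Csub (Cmul (Cinv sqrt2) (Cadd (x p) (Cmul Ci (x (S p)))))
                (Cmul (Cinv sqrt2) (Cadd (y p) (Cmul Ci (y (S p))))))
    with (Cmul (Cinv sqrt2) (Cadd (Csub (x p) (y p)) (Cmul Ci (Csub (x (S p)) (y (S p))))))
    by (field; apply sqrt2_neq0).
  rewrite Cnorm2_Cinv_sqrt2_mul.
  set (a := Csub (x p) (y p)). set (b := Csub (x (S p)) (y (S p))).
  assert (Cnorm2 (Cadd a (Cmul Ci b)) <= 2 * (Cnorm2 a + Cnorm2 b)).
  { destruct a as [a1 a2], b as [b1 b2]. unfold Cnorm2, Cmul, Cadd, Ci; simpl.
    pose proof (pow2_ge_0 (a1 + b2)). pose proof (pow2_ge_0 (a2 - b1)). nra. }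
  lra.
Qed.

Lemma H_map_Cdifferentiable n p G z i :
  (forall j, (j < S p)%nat -> Cdifferentiable n (fun x => G x j) z) ->
  Csub C1 (G z p) <> C0 -> Cdifferentiable n (fun x => H_map (S p) G x i) z.
Proof.
  intros Dg Hw.
  assert (Ds : Cdifferentiable n (fun x => sumsq p (G x)) z) by (apply Cdifferentiable_sumsq; auto).
  assert (Dw : Cdifferentiable n (fun x => G x p) z) by auto.
  assert (Dsq : Cdifferentiable n (fun x => sq (G x p)) z) by (apply Cdifferentiable_mul; auto).
  assert (DQ : Cdifferentiable n (fun x => Cmul sqrt2 (Csub C1 (G x p))) z).
  { apply Cdifferentiable_scal, Cdifferentiable_sub; auto. apply Cdifferentiable_const. }
  assert (NQ : Cmul sqrt2 (Csub C1 (G z p)) <> C0) by (apply Cmul_neq0; auto; apply sqrt2_neq0).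
  destruct (Nat.lt_ge_cases i p); [|destruct (Nat.eq_dec i p); [|destruct (Nat.eq_dec i (S p))]].
  - apply Cdifferentiable_ext with (fun x => G x i). intros; rewrite H_map_lt; auto. auto.
  - subst. apply Cdifferentiable_ext
      with (fun x => Cdiv (Pm (sumsq p (G x)) (G x p)) (Cmul sqrt2 (Csub C1 (G x p)))).
    { intros; rewrite H_map_p; auto. }
    apply Cdifferentiable_div; auto.
    apply Cdifferentiable_add; [apply Cdifferentiable_sub; [apply Cdifferentiable_scal|]|]; auto.
  - subst. apply Cdifferentiable_ext
      with (fun x => Cdiv (Pm1 (sumsq p (G x)) (G x p)) (Cmul sqrt2 (Csub C1 (G x p)))).
    { intros; rewrite H_map_Sp; auto. }
    apply Cdifferentiable_div; auto.
    apply Cdifferentiable_scal, Cdifferentiable_sub;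
      [apply Cdifferentiable_add; [apply Cdifferentiable_scal|]|]; auto.
  - apply Cdifferentiable_ext with (fun _ => C0); [|apply Cdifferentiable_const].
    intros. rewrite H_map_inC; auto. lia.
Qed.

Lemma H_map_proper_holomorphic n p G : proper_holomorphic n (S p) (ball (S p)) G ->
  proper_holomorphic n (S (S p)) (DIV (S (S p))) (H_map (S p) G).
Proof.
  intros HG. pose proof HG as [_ [HGball _]].
  assert (Hw : forall z, ball n z -> Csub C1 (G z p) <> C0).
  { intros z Bz. destruct (HGball z Bz) as [_ Gn].
    apply Csub1_neq0. pose proof (Cnorm2_le_vnorm2 (S p) (G z) p ltac:(lia)). lra. }
  apply (proper_holomorphic_DIV_of_ivform (S p) n (S (S p)) G _ (psiH p)); auto.
  - intros z Bz. apply functional_extensionality. intro i. unfold psiH.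
    destruct (Nat.ltb_spec i p); [rewrite H_map_lt; auto|].
    destruct (Nat.eqb_spec i p).
    + subst i. rewrite H_map_p, H_map_Sp, !Cdiv_sqrt2_mul by auto.
      rewrite (H_last_recover (sumsq p (G z)) (G z p)) at 1 by auto.
      rewrite <- sqrt2_sq. field. split; auto. apply sqrt2_neq0.
    + apply (HGball z Bz). lia.
  - intros z Bz. apply H_ivform; auto.
  - intros z Bz. apply H_norm_lt2, HGball; auto.
  - intros Z i Hi. unfold psiH. destruct (Nat.ltb_spec i p); [lia|].
    destruct (Nat.eqb_spec i p); [lia|]. auto.
  - apply psiH_contraction.
  - intros; apply H_map_inC.
  - intros z Bz i _. apply H_map_Cdifferentiable; auto.
    intros; eapply Cdifferentiable_of_proper_holomorphic; eauto.
Qed.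

(** * The map W_G *)

Lemma W_map_lt m G z i : (i < m)%nat -> W_map m G z i = G z i.
Proof. intros. unfold W_map. destruct (Nat.ltb_spec i m); [auto|lia]. Qed.

Lemma W_map_m m G z : W_map m G z m = Csub C1 (Csqrt (Csub C1 (sumsq m (G z)))).
Proof. unfold W_map. rewrite Nat.ltb_irrefl, Nat.eqb_refl. reflexivity. Qed.

Lemma W_map_inC m G z : inC (S m) (W_map m G z).
Proof.
  intros i Hi. unfold W_map. destruct (Nat.ltb_spec i m); [lia|].
  destruct (Nat.eqb_spec i m); [lia|]. auto.
Qed.

Lemma W_ivform m G z : ivform (S m) (W_map m G z) = 1 - vnorm2 m (G z).
Proof.
  unfold ivform, vnorm2. cbn [sumR sumC].
  rewrite (sumR_ext m _ (fun i => Cnorm2 (G z i))) by (intros; rewrite W_map_lt; auto).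
  rewrite (sumC_ext m _ (fun i => sq (G z i))) by (intros; rewrite W_map_lt; auto).
  rewrite W_map_m. fold (sumsq m (G z)).
  set (s := sumsq m (G z)). pose proof (Csqrt_sq (Csub C1 s)) as Er.
  set (r := Csqrt (Csub C1 s)) in *.
  replace (Cadd s (Cmul (Csub C1 r) (Csub C1 r))) with (Cmul (Cadd C1 C1) (Csub C1 r))
    by (replace s with (Csub C1 (Cmul r r)) by (rewrite Er; field); field).
  rewrite Cnorm2_mul. replace (Cnorm2 (Cadd C1 C1)) with 4 by (unfold Cnorm2; simpl; ring).
  lra.
Qed.

(* [(1 - r)(1 + r) = s] with [|1 + r| >= 1] since [Re r >= 0]. *)
Lemma W_norm_lt2 m G z : vnorm2 m (G z) < 1 -> vnorm2 (S m) (W_map m G z) < 2.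
Proof.
  intros Hn. unfold vnorm2 at 1. cbn [sumR].
  rewrite (sumR_ext m _ (fun i => Cnorm2 (G z i))) by (intros; rewrite W_map_lt; auto).
  rewrite W_map_m. fold (vnorm2 m (G z)).
  pose proof (Cabs_sumC_sq m (G z)) as Hs. fold (sumsq m (G z)) in Hs.
  set (s := sumsq m (G z)) in *. pose proof (Csqrt_sq (Csub C1 s)) as Er.
  pose proof (Csqrt_Re_ge0 (Csub C1 s)).
  set (r := Csqrt (Csub C1 s)) in *.
  assert (E : Cmul (Csub C1 r) (Cadd C1 r) = s)
    by (replace s with (Csub C1 (Cmul r r)) by (rewrite Er; field); field).
  assert (N1 : 1 <= Cnorm2 (Cadd C1 r)) by (destruct r as [x y]; unfold Cnorm2; simpl in *; nra).
  assert (Hs1 : Cnorm2 s < 1).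
  { rewrite <- Cabs_sq. pose proof (Cabs_ge0 s). pose proof (vnorm2_ge0 m (G z)). nra. }
  rewrite <- E, Cnorm2_mul in Hs1. pose proof (Cnorm2_ge0 (Csub C1 r)). nra.
Qed.

Definition psiW (m : nat) (Z : pt) : pt := fun i => if (i <? m)%nat then Z i else C0.

Lemma psiW_contraction m x y :
  vnorm2 m (fun i => Csub (psiW m x i) (psiW m y i)) <= vnorm2 (S m) (fun i => Csub (x i) (y i)).
Proof.
  unfold vnorm2 at 2. cbn [sumR].
  rewrite (sumR_ext m _ (fun i => Cnorm2 (Csub (psiW m x i) (psiW m y i)))).
  - pose proof (Cnorm2_ge0 (Csub (x m) (y m))). unfold vnorm2. lra.
  - intros. unfold psiW. destruct (Nat.ltb_spec i m); [auto|lia].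
Qed.

Lemma W_map_Cdifferentiable n m G z i :
  (forall j, (j < m)%nat -> Cdifferentiable n (fun x => G x j) z) ->
  vnorm2 m (G z) < 1 -> Cdifferentiable n (fun x => W_map m G x i) z.
Proof.
  intros Dg Hn. destruct (Nat.lt_ge_cases i m); [|destruct (Nat.eq_dec i m)].
  - apply Cdifferentiable_ext with (fun x => G x i). intros; rewrite W_map_lt; auto. auto.
  - subst. apply Cdifferentiable_ext with (fun x => Csub C1 (Csqrt (Csub C1 (sumsq m (G x))))).
    { intros; rewrite W_map_m; auto. }
    apply Cdifferentiable_sub; [apply Cdifferentiable_const|].
    apply Cdifferentiable_sqrt; [|apply Re_one_sub_sumsq_pos; auto].
    apply Cdifferentiable_sub; [apply Cdifferentiable_const|]. apply Cdifferentiable_sumsq; auto.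
  - apply Cdifferentiable_ext with (fun _ => C0); [|apply Cdifferentiable_const].
    intros. rewrite W_map_inC; auto. lia.
Qed.

Lemma W_map_proper_holomorphic n m G : proper_holomorphic n m (ball m) G ->
  proper_holomorphic n (S m) (DIV (S m)) (W_map m G).
Proof.
  intros HG. pose proof HG as [_ [HGball _]].
  apply (proper_holomorphic_DIV_of_ivform m n (S m) G _ (psiW m)); auto.
  - intros z Bz. apply functional_extensionality. intro i. unfold psiW.
    destruct (Nat.ltb_spec i m); [rewrite W_map_lt; auto|].
    destruct (HGball z Bz) as [Gin _]. apply Gin; lia.
  - intros z Bz. apply W_ivform.
  - intros z Bz. apply W_norm_lt2, HGball; auto.
  - intros Z i Hi. unfold psiW. destruct (Nat.ltb_spec i m); [lia|auto].
  - apply psiW_contraction.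
  - intros; apply W_map_inC.
  - intros z Bz i _. apply W_map_Cdifferentiable; [|apply HGball; auto].
    intros; eapply Cdifferentiable_of_proper_holomorphic; eauto.
Qed.

Theorem mainTheorem17 (m n : nat) (G : pt -> pt) :
  (1 <= n)%nat -> (n <= m)%nat ->
  proper_holomorphic n m (ball m) G ->
  G zero_pt = zero_pt ->
  (forall z, ball n z ->
     ivform (S m) (H_map m G z) = 1 - vnorm2 m (G z) /\
     ivform (S m) (W_map m G z) = 1 - vnorm2 m (G z)) /\
  proper_holomorphic n (S m) (DIV (S m)) (H_map m G) /\
  proper_holomorphic n (S m) (DIV (S m)) (W_map m G).
Proof.
  intros Hn Hnm HG _. destruct m as [|p]; [lia|].
  split; [|split].
  - intros z Bz. destruct HG as [_ [HGball _]]. destruct (HGball z Bz) as [_ Gn].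
    split; [|apply W_ivform].
    apply H_ivform, Csub1_neq0.
    pose proof (Cnorm2_le_vnorm2 (S p) (G z) p ltac:(lia)). lra.
  - apply H_map_proper_holomorphic; auto.
  - apply W_map_proper_holomorphic; auto.
Qed.
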